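(* Let $(H,\partial)$ be a right (respectively extended) Cartan–Eilenberg system. The right couple $(A'',E^1)$ converges conditionally to the limit, i.e. $\operatorname{colim}_sH(s,\infty)=0$, if and only if the canonical map $\bar\eta\colon\operatorname{colim}_jH(i,j)\to H(i,\infty)$ is an isomorphism for some $i\in\mathbb{Z}$ (respectively some $i\in\mathbb{Z}\cup\{-\infty\}$); in that case it is an isomorphism for every $i\in\mathbb{Z}$ (respectively every $i\in\mathbb{Z}\cup\{-\infty\}$).
   Context: Let $\mathcal{A}$ be the category of $\mathbb{Z}$-graded $R$-modules. For a linearly ordered set $\mathcal{I}$, an $\mathcal{I}$-system $(H,\partial)$ consists of objects $H(i,j)$ for $i\le j$ in $\mathcal{I}$, functorial morphisms $\eta\colon H(i,j)\to H(i',j')$ (internal degree $0$) for $i\le i'$, $j\le j'$, and natural morphisms $\partial\colon H(j,k)\to H(i,j)$ (internal degree $-1$) for $i\le j\le k$, with $H(i,j)\xrightarrow{\eta}H(i,k)\xrightarrow{\eta}H(j,k)\xrightarrow{\partial}H(i,j)$ exact at each vertex. A right Cartan–Eilenberg system is a $(\mathbb{Z}\cup\{+\infty\})$-system; an extended Cartan–Eilenberg system is a $(\mathbb{Z}\cup\{\pm\infty\})$-system ($\pm\infty$ greatest/least elements). Right couple: $A''_s=H(s,\infty)$, $E^1_s=H(s-1,s)$, $\alpha_s=\eta$, $\beta_s=\partial\colon H(s,\infty)\to H(s-1,s)$, $\gamma_s=\eta\colon H(s-1,s)\to H(s-1,\infty)$. An exact couple converges conditionally to the limit if $\operatorname{colim}_sA_s=0$.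 The colimit $\operatorname{colim}_jH(i,j)$ is over integers $j\to\infty$ along $\eta$, and $\bar\eta$ is induced by $\eta\colon H(i,j)\to H(i,\infty)$. *)

From HB Require Import structures.
From mathcomp Require Import all_boot all_order all_algebra.
Set Implicit Arguments. Unset Strict Implicit. Unset Printing Implicit Defensive.
Import Order.TTheory GRing.Theory Num.Theory.
Local Open Scope ring_scope.

(* A Z-graded R-module is modelled as a family (M_n)_{n : int} of R-modules;
   a morphism of internal degree d is a family of R-linear maps M_n -> N_{n+d}. *)

Inductive rint : Type := RFin of int | RInf.
Definition rle (a b : rint) : bool :=
  match a, b with
  | RFin x, RFin y => (x <= y)%R
  | _, RInf => true
  | RInf, RFin _ => false
  end.

Inductive eint : Type := EMInf | EFin of int | EPInf.
Definition ele (a b : eint) : bool :=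
  match a, b with
  | EMInf, _ => true
  | _, EPInf => true
  | EFin x, EFin y => (x <= y)%R
  | EFin _, EMInf => false
  | EPInf, _ => false
  end.

(* H i j n : degree-n part of H(i,j) (only meaningful for i <= j).
   eta i j i' j' n : H(i,j)_n -> H(i',j')_n   (internal degree 0)
   del i j k n     : H(j,k)_{n+1} -> H(i,j)_n (internal degree -1) *)
Record ISystem (R : nzRingType) (I : Type) (le : rel I) := {
  H : I -> I -> int -> lmodType R;
  eta : forall (i j i' j' : I) (n : int), {linear H i j n -> H i' j' n};
  del : forall (i j k : I) (n : int), {linear H j k (n + 1) -> H i j n};
  eta_id : forall i j n (x : H i j n), le i j -> eta i j i j n x = x;
  eta_comp : forall i j i' j' i'' j'' n (x : H i j n),
    le i j -> le i' j' -> le i'' j'' ->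
    le i i' -> le i' i'' -> le j j' -> le j' j'' ->
    eta i' j' i'' j'' n (eta i j i' j' n x) = eta i j i'' j'' n x;
  del_natural : forall i j k i' j' k' n (x : H j k (n + 1)),
    le i j -> le j k -> le i' j' -> le j' k' ->
    le i i' -> le j j' -> le k k' ->
    eta i j i' j' n (del i j k n x) = del i' j' k' n (eta j k j' k' (n + 1) x);
  exact_ik : forall i j k n (y : H i k n), le i j -> le j k ->
    (eta i k j k n y = 0 <-> exists x : H i j n, eta i j i k n x = y);
  exact_jk : forall i j k n (y : H j k (n + 1)), le i j -> le j k ->
    (del i j k n y = 0 <-> exists x : H i k (n + 1), eta i k j k (n + 1) x = y);
  exact_ij : forall i j k n (y : H i j n), le i j -> le j k ->
    (eta i j i k n y = 0 <-> exists x : H j k (n + 1), del i j k n x = y)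
}.

Definition RightCESystem (R : nzRingType) := ISystem R rle.
Definition ExtendedCESystem (R : nzRingType) := ISystem R ele.

(* colim_s H(s,oo) = 0 (colimit over s in Z along eta), degreewise,
   using the standard description of a sequential colimit of modules. *)
Definition cond_conv_limit (R : nzRingType) (I : Type) (le : rel I)
    (fin : int -> I) (top : I) (S : ISystem R le) : Prop :=
  forall (n s : int) (x : H S (fin s) top n),
    exists t : int, (s <= t)%R /\ eta S (fin s) top (fin t) top n x = 0.

(* The canonical map colim_{j in Z, j -> oo} H(i,j) -> H(i,oo) induced by eta
   is an isomorphism (injective and surjective, degreewise). *)
Definition colim_map_iso (R : nzRingType) (I : Type) (le : rel I)
    (fin : int -> I) (top : I) (S : ISystem R le) (i : I) : Prop :=
  forall n : int,
    (forall (j : int) (x : H S i (fin j) n), le i (fin j) ->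
       eta S i (fin j) i top n x = 0 ->
       exists j' : int, (j <= j')%R /\ eta S i (fin j) i (fin j') n x = 0) /\
    (forall y : H S i top n,
       exists j : int, le i (fin j) /\
         exists x : H S i (fin j) n, eta S i (fin j) i top n x = y).

From Pilot Require Import Defs.
From HB Require Import structures.
From mathcomp Require Import all_boot all_order all_algebra.
Set Implicit Arguments. Unset Strict Implicit. Unset Printing Implicit Defensive.
Import Order.TTheory GRing.Theory Num.Theory.
Local Open Scope ring_scope.

(* Both directions are diagram chases in the exact triangles
   H(i,s) -> H(i,oo) -> H(s,oo) -> H(i,s), using H(t,t) = 0.
   If colim_s H(s,oo) = 0, a class of H(i,oo) dies in some H(t,oo), hence
   lifts to H(i,t); a class of H(i,j) killed in H(i,oo) is the boundary of
   a class of H(j,oo), which dies in some H(t,oo), so it dies in H(i,t).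
   Conversely, for x in H(s,oo) with s >= i, its boundary dies in some
   H(i,j'), so the image of x in H(j',oo) lifts to H(i,oo), hence comes from
   some H(i,j); pushed to H(t,oo) with t >= j, j' it factors through
   H(t,t) = 0. Only i bounded by a finite index matters, which is why the
   statement covers -oo but not +oo. *)

Section ConditionalConvergence.

Variables (R : nzRingType) (I : Type) (le : rel I).
Variables (fin : int -> I) (top : I) (S : ISystem R le).

Hypothesis leI_refl : reflexive le.
Hypothesis leI_trans : forall a b c, le a b -> le b c -> le a c.
Hypothesis leI_fin : forall a b, le (fin a) (fin b) = (a <= b).
Hypothesis leI_top : forall x, le x top.

Local Notation eta := (Defs.eta S).
Local Notation del := (Defs.del S).

Lemma H_diag_eq0 j n (y : H S j j n) : y = 0.
Proof.
rewrite -(eta_id y (leI_refl j)).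
apply/(exact_ik y (leI_refl j) (leI_refl j)).2.
by exists y; rewrite eta_id.
Qed.

Lemma le_fin_trans i s t : le i (fin s) -> s <= t -> le i (fin t).
Proof. by move=> his hst; apply: leI_trans his _; rewrite leI_fin. Qed.

Definition bounded_by_fin (i : I) := forall s, exists t, s <= t /\ le i (fin t).

Section FixedIndex.

Variable i : I.
Hypothesis bounded_i : bounded_by_fin i.

Lemma colim_map_inj_of_cond_conv : cond_conv_limit fin top S ->
  forall n j (x : H S i (fin j) n), le i (fin j) ->
    eta i (fin j) i top n x = 0 ->
    exists t, j <= t /\ eta i (fin j) i (fin t) n x = 0.
Proof.
move=> conv n j x hij hx.
have [w hw] := (exact_ij x hij (leI_top _)).1 hx.
have [t [hjt ht]] := conv (n + 1) j w.
exists t; split=> //.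
rewrite -hw (del_natural w (k' := top)) ?leI_fin ?(le_fin_trans hij) //.
by rewrite ht raddf0.
Qed.

Lemma colim_map_surj_of_cond_conv : cond_conv_limit fin top S ->
  forall n (y : H S i top n),
    exists j, le i (fin j) /\ exists x, eta i (fin j) i top n x = y.
Proof.
move=> conv n y; have [s [_ his]] := bounded_i 0.
have [t [hst ht]] := conv n s (eta i top (fin s) top n y).
have hit := le_fin_trans his hst.
have y_dies : eta i top (fin t) top n y = 0.
  by rewrite -ht (eta_comp y) ?leI_fin.
have [x hx] := (exact_ik y hit (leI_top _)).1 y_dies.
by exists t; split=> //; exists x.
Qed.

Lemma colim_map_iso_of_cond_conv :
  cond_conv_limit fin top S -> colim_map_iso fin top S i.
Proof.
move=> conv n; split.
- exact: colim_map_inj_of_cond_conv.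
- exact: colim_map_surj_of_cond_conv.
Qed.

Lemma cond_conv_above_of_colim_map_iso : colim_map_iso fin top S i ->
  forall n s (x : H S (fin s) top (n + 1)), le i (fin s) ->
    exists t, s <= t /\ eta (fin s) top (fin t) top (n + 1) x = 0.
Proof.
move=> iso n s x his.
have bd_dies : eta i (fin s) i top n (del i (fin s) top n x) = 0.
  by apply/(exact_ij _ his (leI_top _)); exists x.
have [j' [hsj' bd_dies']] := (iso n).1 s _ his bd_dies.
have hij' := le_fin_trans his hsj'.
set x' := eta (fin s) top (fin j') top (n + 1) x.
have bd_x' : del i (fin j') top n x' = 0.
  by rewrite /x' -(del_natural x (i := i) (i' := i)) ?leI_fin.
have [w hw] := (exact_jk x' hij' (leI_top _)).1 bd_x'.
have [j [hij [u hu]]] := (iso (n + 1)).2 w.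
pose t := Num.max j j'.
have hjt : j <= t by rewrite le_max lexx.
have hj't : j' <= t by rewrite le_max lexx orbT.
exists t; split; first exact: le_trans hsj' hj't.
rewrite -(eta_comp x (i' := fin j') (j' := top)) ?leI_fin // -/x' -hw.
have hit := le_fin_trans hij hjt.
rewrite (eta_comp w) ?leI_fin // -hu (eta_comp u) ?leI_fin //.
rewrite -(eta_comp u (i' := fin j) (j' := fin j)) ?leI_fin //.
by rewrite [eta i _ _ _ _ u]H_diag_eq0 raddf0.
Qed.

Lemma cond_conv_of_colim_map_iso :
  colim_map_iso fin top S i -> cond_conv_limit fin top S.
Proof.
move=> iso n s; rewrite -[n](subrK 1) => x.
have [m [hsm him]] := bounded_i s.
have [t [hmt ht]] :=
  cond_conv_above_of_colim_map_iso iso (eta (fin s) top (fin m) top _ x) him.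
exists t; split; first exact: le_trans hmt.
by rewrite -(eta_comp x (i' := fin m) (j' := top)) ?leI_fin.
Qed.

Lemma cond_conv_limit_iff_colim_map_iso :
  cond_conv_limit fin top S <-> colim_map_iso fin top S i.
Proof.
split; [exact: colim_map_iso_of_cond_conv | exact: cond_conv_of_colim_map_iso].
Qed.

End FixedIndex.

End ConditionalConvergence.

Lemma rle_refl : reflexive rle.
Proof. by case=> //= a; rewrite lexx. Qed.

Lemma rle_trans a b c : rle a b -> rle b c -> rle a c.
Proof. by case: a; case: b; case: c => //= x y z; apply: le_trans. Qed.

Lemma rle_top a : rle a RInf.
Proof. by case: a. Qed.

Lemma rle_bounded_by_fin i : bounded_by_fin rle RFin (RFin i).
Proof. by move=> s; exists (Num.max s i); rewrite /= !le_max !lexx orbT. Qed.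

Lemma ele_refl : reflexive ele.
Proof. by case=> //= a; rewrite lexx. Qed.

Lemma ele_trans a b c : ele a b -> ele b c -> ele a c.
Proof. by case: a; case: b; case: c => //= x y z; apply: le_trans. Qed.

Lemma ele_top a : ele a EPInf.
Proof. by case: a. Qed.

Lemma ele_bounded_by_fin i : i <> EPInf -> bounded_by_fin ele EFin i.
Proof.
case: i => [|a|] // _ s; first by exists s; rewrite lexx.
by exists (Num.max s a); rewrite /= !le_max !lexx orbT.
Qed.

Theorem proposition6p4 :
  (forall (R : nzRingType) (S : RightCESystem R),
     (cond_conv_limit RFin RInf S <->
        exists i : int, colim_map_iso RFin RInf S (RFin i)) /\
     (cond_conv_limit RFin RInf S ->
        forall i : int, colim_map_iso RFin RInf S (RFin i))) /\
  (forall (R : nzRingType) (S : ExtendedCESystem R),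
     (cond_conv_limit EFin EPInf S <->
        exists i : eint, i <> EPInf /\ colim_map_iso EFin EPInf S i) /\
     (cond_conv_limit EFin EPInf S ->
        forall i : eint, i <> EPInf -> colim_map_iso EFin EPInf S i)).
Proof.
split=> R S.
- have conv_iff i :=
    cond_conv_limit_iff_colim_map_iso (fin := RFin) S rle_refl rle_trans
      (fun a b => erefl) rle_top (rle_bounded_by_fin i).
  split; last by move=> conv i; apply/conv_iff.
  by split=> [conv | [i /conv_iff //]]; exists 0; apply/conv_iff.
- have conv_iff i (hi : i <> EPInf) :=
    cond_conv_limit_iff_colim_map_iso (fin := EFin) S ele_refl ele_trans
      (fun a b => erefl) ele_top (ele_bounded_by_fin hi).
  split; last by move=> conv i hi; apply/(conv_iff i hi).
  split=> [conv | [i [hi /(conv_iff i hi) //]]].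
  by exists (EFin 0); split=> //; apply/conv_iff.
Qed.
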